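(* Let $E\in M_n(\mathbb{FT})$ be idempotent. Then the column space $C(E)$ is min-plus convex if and only if there exists an idempotent $F\in M_n(\mathbb{FT})$ with $F_{i,i}=0$ for all $i$ and $C(F)=C(E)$.
   Context: $\mathbb{FT}$ is $\mathbb{R}$ with $a\oplus b=\max(a,b)$, $a\otimes b=a+b$; $M_n(\mathbb{FT})$ is the semigroup of real $n\times n$ matrices under $(A\otimes B)_{i,j}=\max_k(A_{i,k}+B_{k,j})$. $C(A)\subseteq\mathbb{R}^n$ is the set of all finite componentwise maxima of columns of $A$ each shifted by a real constant (added to all coordinates). A subset $X\subseteq\mathbb{R}^n$ is min-plus convex if it is closed under componentwise minimum and under adding a real constant to all coordinates. *)

From mathcomp Require Import all_boot all_order all_algebra.
From mathcomp Require Import Rstruct.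
From Stdlib Require Import Reals.
Set Implicit Arguments. Unset Strict Implicit. Unset Printing Implicit Defensive.
Import Order.TTheory GRing.Theory Num.Theory.
Local Open Scope ring_scope.

(* Tropical (max-plus) matrix product on n x n real matrices.
   The seed A i j + B j j is itself one of the terms (k = j), so this is
   exactly max_k (A i k + B k j). *)
Definition tmul (n : nat) (A B : 'M[R]_n) : 'M[R]_n :=
  \matrix_(i, j) \big[Order.max/A i j + B j j]_(k < n) (A i k + B k j).

Definition tidempotent (n : nat) (E : 'M[R]_n) : Prop := tmul E E = E.

(* Componentwise maximum of a nonempty finite family of shifted columns:
   the family is (c0,l0) :: s, a column index and a real shift each. *)
Definition tcomb (n : nat) (A : 'M[R]_n) (c0 : 'I_n) (l0 : R)
  (s : seq ('I_n * R)) : 'I_n -> R :=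
  fun i => \big[Order.max/A i c0 + l0]_(p <- s) (A i p.1 + p.2).

Definition colspace (n : nat) (A : 'M[R]_n) : ('I_n -> R) -> Prop :=
  fun x => exists c0 l0 s, forall i, x i = tcomb A c0 l0 s i.

Definition minplus_convex (n : nat) (X : ('I_n -> R) -> Prop) : Prop :=
  (forall x y, X x -> X y -> X (fun i => Order.min (x i) (y i))) /\
  (forall x (l : R), X x -> X (fun i => x i + l)).

From mathcomp Require Import all_boot all_order all_algebra.
From mathcomp Require Import Rstruct.
From Stdlib Require Import Reals FunctionalExtensionality.
Set Implicit Arguments. Unset Strict Implicit. Unset Printing Implicit Defensive.
Import Order.TTheory GRing.Theory Num.Theory.
Local Open Scope ring_scope.

(* For x in C(E), the offsets G i j = min_k (E i k - E j k) between rows of E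
   satisfy G i j + x j <= x i, i.e. G ⊗ x <= x.  The columns of G are min-plus
   combinations of columns of E, so when C(E) is min-plus convex they lie in
   C(E); G then has zero diagonal, is idempotent, and its column space is
   {x | G ⊗ x <= x} = C(E).  Conversely, for an idempotent F with zero diagonal
   C(F) = {x | F ⊗ x <= x}, which is evidently min-plus convex. *)

Definition tsubeigen n (F : 'M[R]_n) (x : 'I_n -> R) : Prop :=
  forall i j, F i j + x j <= x i.

Definition diffmx n (E : 'M[R]_n) : 'M[R]_n :=
  \matrix_(i, j) \big[Order.min/E i j - E j j]_(k < n) (E i k - E j k).

Section ColumnSpace.
Variables (n : nat).
Implicit Types (A B E F : 'M[R]_n) (x y : 'I_n -> R).

Lemma tcomb_leP A c0 l0 s i b :
  reflect (forall p, p \in (c0, l0) :: s -> A i p.1 + p.2 <= b)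
          (tcomb A c0 l0 s i <= b).
Proof.
apply: (iffP idP) => [le_b p | le_b]; last first.
  rewrite /tcomb big_seq; apply: bigmax_le => [|p p_s].
    exact: (le_b (c0, l0) (mem_head _ _)).
  by apply: le_b; rewrite inE p_s orbT.
rewrite inE => /predU1P[-> | p_s]; apply: le_trans le_b.
  exact: bigmax_ge_id.
exact: (le_bigmax_seq _ p xpredT).
Qed.

Lemma le_tcomb {A c0 l0 s} i {p} :
  p \in (c0, l0) :: s -> A i p.1 + p.2 <= tcomb A c0 l0 s i.
Proof. by move: p; apply/tcomb_leP. Qed.

Lemma colspace_col A j l : colspace A (fun i => A i j + l).
Proof. by exists j, l, [::] => i; rewrite /tcomb big_nil. Qed.

Lemma colspace_shift A x l : colspace A x -> colspace A (fun i => x i + l).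
Proof.
move=> [c0 [l0 [s hx]]]; exists c0, (l0 + l), [seq (p.1, p.2 + l) | p <- s].
move=> i; rewrite hx /tcomb big_map addrA.
rewrite (big_morph (+%R^~ l) (fun a b => addr_maxl a b l) erefl).
by apply: eq_bigr => p _; rewrite addrA.
Qed.

Lemma colspace_max A x y : colspace A x -> colspace A y ->
  colspace A (fun i => Order.max (x i) (y i)).
Proof.
move=> [c [l [s hx]]] [c' [l' [s' hy]]].
exists c, l, (s ++ (c', l') :: s') => i; rewrite hx hy.
have mem_cat_cons p : p \in (c, l) :: s ++ (c', l') :: s' =
    (p \in (c, l) :: s) || (p \in (c', l') :: s') by rewrite -cat_cons mem_cat.
apply/le_anti/andP; split.
  by rewrite ge_max; apply/andP; split; apply/tcomb_leP => p hp;
    apply: le_tcomb; rewrite mem_cat_cons hp ?orbT.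
apply/tcomb_leP => p; rewrite mem_cat_cons le_max => /orP[] hp.
  by rewrite (le_tcomb i hp).
by rewrite (le_tcomb i hp) orbT.
Qed.

Lemma colspace_subset A B x :
  (forall j, colspace B (fun i => A i j)) -> colspace A x -> colspace B x.
Proof.
move=> colA [c0 [l0 [s hx]]].
rewrite (functional_extensionality _ _ hx) {x hx}; elim: s => [|p s IHs].
  have -> : tcomb A c0 l0 [::] = fun i => A i c0 + l0.
    by apply: functional_extensionality => i; rewrite /tcomb big_nil.
  exact: colspace_shift.
have -> : tcomb A c0 l0 (p :: s) =
    fun i => Order.max (A i p.1 + p.2) (tcomb A c0 l0 s i).
  by apply: functional_extensionality => i; rewrite /tcomb big_cons.
by apply: colspace_max IHs; exact: colspace_shift.
Qed.

Lemma colspace_tsubeigen A F x :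
  (forall k, tsubeigen F (fun i => A i k)) -> colspace A x -> tsubeigen F x.
Proof.
move=> subA [c0 [l0 [s hx]]] i j; rewrite !hx.
suff : tcomb A c0 l0 s j <= tcomb A c0 l0 s i - F i j by rewrite lerBrDl.
apply/tcomb_leP => p hp; rewrite lerBrDl.
by apply: le_trans (le_tcomb i hp); rewrite addrA lerD2r subA.
Qed.

Lemma tsubeigen_colspace F x (c0 : 'I_n) :
  (forall i, F i i = 0) -> tsubeigen F x -> colspace F x.
Proof.
move=> F0 subF; exists c0, (x c0), [seq (j, x j) | j <- index_enum 'I_n] => i.
apply/le_anti/andP; split.
  apply: le_trans (le_tcomb (p := (i, x i)) i _); first by rewrite /= F0 add0r.
  by rewrite inE map_f ?mem_index_enum ?orbT.
apply/tcomb_leP => p; rewrite inE => /predU1P[-> | /mapP[j _ ->]]; exact: subF.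
Qed.

Lemma tsubeigen_min F x y : tsubeigen F x -> tsubeigen F y ->
  tsubeigen F (fun i => Order.min (x i) (y i)).
Proof.
move=> subx suby i j; rewrite le_min; apply/andP; split.
  by apply: le_trans (subx i j); rewrite lerD2l ge_min lexx.
by apply: le_trans (suby i j); rewrite lerD2l ge_min lexx orbT.
Qed.

Lemma tidempotent_tsubeigen_col F :
  tidempotent F -> forall k, tsubeigen F (fun i => F i k).
Proof.
move=> /matrixP idF k i j; rewrite -[leRHS]idF mxE.
exact: (le_bigmax _ (fun j => F i j + F j k)).
Qed.

Lemma tidempotent_of_tsubeigen_col F : (forall i, F i i = 0) ->
  (forall k, tsubeigen F (fun i => F i k)) -> tidempotent F.
Proof.
move=> F0 subF; apply/matrixP => i j; rewrite mxE F0 addr0.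
by apply: bigmax_eq_id => k _; exact: subF.
Qed.

Lemma minplus_convex_colspace F : tidempotent F -> (forall i, F i i = 0) ->
  minplus_convex (colspace F).
Proof.
move=> idF F0; split=> [x y Fx Fy | x l]; last exact: colspace_shift.
have [c0 _] := Fx; apply: tsubeigen_colspace c0 F0 _.
by apply: tsubeigen_min; apply: colspace_tsubeigen (tidempotent_tsubeigen_col idF) _.
Qed.

Lemma minplus_convex_ext (X Y : ('I_n -> R) -> Prop) :
  (forall x, X x <-> Y x) -> minplus_convex X -> minplus_convex Y.
Proof.
move=> XY [minX shiftX]; split=> [x y /XY Xx /XY Xy | x l /XY Xx]; apply/XY.
  exact: minX.
exact: shiftX.
Qed.

Lemma min_closed_bigmin (X : ('I_n -> R) -> Prop) (I : Type) (s : seq I)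
    (x0 : 'I_n -> R) (f : I -> 'I_n -> R) :
  (forall x y, X x -> X y -> X (fun i => Order.min (x i) (y i))) ->
  X x0 -> (forall k, X (f k)) ->
  X (fun i => \big[Order.min/x0 i]_(k <- s) f k i).
Proof.
move=> minX Xx0 Xf; elim: s => [|k s IHs].
  have -> : (fun i => \big[Order.min/x0 i]_(k <- [::]) f k i) = x0.
    by apply: functional_extensionality => i; rewrite big_nil.
  exact: Xx0.
have -> : (fun i => \big[Order.min/x0 i]_(k' <- k :: s) f k' i) =
    fun i => Order.min (f k i) (\big[Order.min/x0 i]_(k' <- s) f k' i).
  by apply: functional_extensionality => i; rewrite big_cons.
exact: minX.
Qed.

Lemma diffmx_diag E i : diffmx E i i = 0.
Proof. by rewrite mxE bigmin_eq_id ?subrr // => k _; rewrite !subrr. Qed.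

Lemma diffmx_tsubeigen_col E k : tsubeigen (diffmx E) (fun i => E i k).
Proof. by move=> i j; rewrite -lerBrDr mxE; exact: bigmin_le. Qed.

Lemma colspace_diffmx_col E :
  (forall x y, colspace E x -> colspace E y ->
     colspace E (fun i => Order.min (x i) (y i))) ->
  forall j, colspace E (fun i => diffmx E i j).
Proof.
move=> minE j.
have -> : (fun i => diffmx E i j) =
    fun i => \big[Order.min/E i j - E j j]_(k < n) (E i k - E j k).
  by apply: functional_extensionality => i; rewrite mxE.
by apply: min_closed_bigmin => // [|k]; exact: colspace_col.
Qed.

End ColumnSpace.

Theorem theorem6p1 (n : nat) (E : 'M[R]_n) :
  tidempotent E ->
  (minplus_convex (colspace E) <->
   exists F : 'M[R]_n,
     tidempotent F /\ (forall i, F i i = 0) /\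
     (forall x, colspace F x <-> colspace E x)).
Proof.
move=> _; split=> [[minE _] | [F [idF [F0 CFE]]]]; last first.
  exact: minplus_convex_ext CFE (minplus_convex_colspace idF F0).
have colG := colspace_diffmx_col minE.
have subG k : tsubeigen (diffmx E) (fun i => diffmx E i k).
  exact: colspace_tsubeigen (diffmx_tsubeigen_col E) (colG k).
exists (diffmx E); split.
  exact: tidempotent_of_tsubeigen_col (diffmx_diag E) subG.
split=> [|x]; first exact: diffmx_diag.
split=> [Gx | Ex]; first exact: colspace_subset colG Gx.
have [c0 _] := Ex; apply: tsubeigen_colspace c0 (diffmx_diag E) _.
exact: colspace_tsubeigen (diffmx_tsubeigen_col E) Ex.
Qed.
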